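(* For the 1-nearest-neighbor (1-NN) learning algorithm, there exist noisy-label data distributions (i.e. two group distributions $D_A,D_B$ over $\mathcal{X}\times\{-1,1\}$, with $\mathcal{X}$ a metric space, under which labels are subject to random flipping) and a training-set size $n$ such that the induced evolutionary prediction game has a stable coexistence equilibrium, i.e. a stable Nash equilibrium $\mathbf{p}^*$ with $p^*_A>0$ and $p^*_B>0$.
   Context: 1-NN: given a training set $S=\{(x_i,y_i)\}_{i=1}^n$, predicts for $x$ the label of its nearest training point. The learning algorithm samples $S\sim D_{\mathbf{p}}^n$ i.i.d. from the mixture $D_{\mathbf{p}}=p_AD_A+p_BD_B$ ($\mathbf{p}\in\Delta^2$) and outputs the 1-NN classifier $h_S$. The evolutionary prediction game is $F_k(\mathbf{p})=\mathbb{E}_{S}[\Pr_{(x,y)\sim D_k}[h_S(x)=y]]$. Nash equilibrium: $\mathrm{supp}(\mathbf{p}^* )\subseteq\arg\max_kF_k(\mathbf{p}^* )$. Stability refers to population dynamics $\dot{\mathbf{p}}=V_F(\mathbf{p})$ with $V_F$ continuous, tangent to the simplex, positively correlated with $F$, and Nash-stationary or imitative (e.g. replicator); an equilibrium is stable if it attracts all nearby states. *)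

From HB Require Import structures.
From mathcomp Require Import all_boot all_order all_algebra.
From mathcomp Require Import all_classical all_reals all_analysis.
Set Implicit Arguments. Unset Strict Implicit. Unset Printing Implicit Defensive.
Import Order.TTheory GRing.Theory Num.Theory.
Import numFieldNormedType.Exports.
Local Open Scope ring_scope.
Local Open Scope classical_set_scope.

(* Conventions: labels {-1,1} are encoded as bool (true = +1, false = -1);
   the two groups/strategies are encoded as bool (true = A, false = B);
   a population state p = (p_A, p_B) is a pair of reals. *)

Section Defs.
Variable R : realType.

Definition is_metric (X : Type) (d : X -> X -> R) : Prop :=
  [/\ (forall x y, 0 <= d x y), (forall x y, d x y = 0 <-> x = y),
      (forall x y, d x y = d y x) & (forall x y z, d x z <= d x y + d y z)].

(** 1-NN prediction on a labelled sample s (ties broken in favour of the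
    earliest sample point; a non-empty sample is always used below). *)
Fixpoint nn_aux (X : Type) (d : X -> X -> R) (x : X) (best : X * bool)
    (s : seq (X * bool)) : X * bool :=
  if s is z :: s' then nn_aux d x (if d x z.1 < d x best.1 then z else best) s'
  else best.

Definition one_nn (X : Type) (d : X -> X -> R) (s : seq (X * bool)) (x : X) : bool :=
  if s is z :: s' then (nn_aux d x z s').2 else true.

(** Data distributions over X x {-1,1} with finite support: the point of
    index i : 'I_m is pts i; D (i, y) is the probability of (pts i, y). *)
Definition noisy_label_dist (X : Type) (m : nat) (pts : 'I_m -> X)
    (D : 'I_m * bool -> R) : Prop :=
  exists (mu : 'I_m -> R) (f : X -> bool) (eta : R),
    [/\ (forall i, 0 <= mu i), \sum_(i < m) mu i = 1, 0 < eta, eta < 1 / 2 &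
        forall i y, D (i, y) = mu i * (if y == f (pts i) then 1 - eta else eta)].

Definition simplex2 : set (R * R) :=
  [set p | [/\ 0 <= p.1, 0 <= p.2 & p.1 + p.2 = 1]].

Definition mixture (m : nat) (DA DB : 'I_m * bool -> R) (p : R * R)
    (z : 'I_m * bool) : R := p.1 * DA z + p.2 * DB z.

Definition sample_prob (m n : nat) (P : 'I_m * bool -> R)
    (S : {ffun 'I_n -> 'I_m * bool}) : R := \prod_(j < n) P (S j).

Definition nn_accuracy (X : Type) (d : X -> X -> R) (m : nat) (pts : 'I_m -> X)
    (n : nat) (S : {ffun 'I_n -> 'I_m * bool}) (Dk : 'I_m * bool -> R) : R :=
  \sum_(z : 'I_m * bool)
     Dk z * (one_nn d [seq (pts (S j).1, (S j).2) | j <- enum 'I_n] (pts z.1)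
               == z.2)%:R.

Definition game (X : Type) (d : X -> X -> R) (m : nat) (pts : 'I_m -> X)
    (n : nat) (DA DB : 'I_m * bool -> R) (p : R * R) : R * R :=
  (\sum_(S : {ffun 'I_n -> 'I_m * bool})
      sample_prob (mixture DA DB p) S * nn_accuracy d pts S DA,
   \sum_(S : {ffun 'I_n -> 'I_m * bool})
      sample_prob (mixture DA DB p) S * nn_accuracy d pts S DB).

Definition comp (p : R * R) (k : bool) : R := if k then p.1 else p.2.

Definition nash (F : R * R -> R * R) (p : R * R) : Prop :=
  simplex2 p /\ forall k, 0 < comp p k -> forall j, comp (F p) j <= comp (F p) k.

Definition tangent_field (V : R * R -> R * R) : Prop :=
  forall p, simplex2 p ->
    [/\ (V p).1 + (V p).2 = 0, (p.1 = 0 -> 0 <= (V p).1) & (p.2 = 0 -> 0 <= (V p).2)].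

Definition positively_correlated (F V : R * R -> R * R) : Prop :=
  forall p, simplex2 p -> V p <> (0, 0) ->
    0 < (V p).1 * (F p).1 + (V p).2 * (F p).2.

Definition nash_stationary (F V : R * R -> R * R) : Prop :=
  forall p, simplex2 p -> (V p = (0, 0) <-> nash F p).

(** imitative dynamics (Sandholm): V_i = sum_j p_j p_i r_ji - p_i sum_j p_j r_ij,
    with nonnegative conditional imitation rates r satisfying net monotonicity *)
Definition imitative (F V : R * R -> R * R) : Prop :=
  exists r : bool -> bool -> R * R -> R,
    forall p, simplex2 p ->
    [/\ (forall i j, 0 <= r i j p),
        (forall i, comp (V p) i =
           \sum_(j : bool) comp p j * comp p i * r j i p
           - comp p i * \sum_(j : bool) comp p j * r i j p) &
        (forall i j k, comp (F p) i <= comp (F p) j <->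
                       r k i p - r i k p <= r k j p - r j k p)].

Definition admissible_dynamics (F V : R * R -> R * R) : Prop :=
  [/\ {within simplex2, continuous V}, tangent_field V,
      positively_correlated F V & (nash_stationary F V \/ imitative F V)].

(** p* is stable: it attracts all nearby states, i.e. every solution of the
    dynamics in the simplex starting close enough to p* converges to p*. *)
Definition attracting (V : R * R -> R * R) (ps : R * R) : Prop :=
  exists2 delta : R, 0 < delta &
    forall a b : R -> R,
      (forall t, 0 <= t -> simplex2 (a t, b t)) ->
      `|a 0 - ps.1| < delta -> `|b 0 - ps.2| < delta ->
      {within [set t : R | 0 <= t], continuous a} ->
      {within [set t : R | 0 <= t], continuous b} ->
      (forall t, 0 < t ->
         [/\ derivable a t 1, derivable b t 1,
             a^`() t = (V (a t, b t)).1 & b^`() t = (V (a t, b t)).2]) ->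
      (a t @[t --> +oo] --> ps.1) /\ (b t @[t --> +oo] --> ps.2).

End Defs.

(* With two training samples the payoff gap F_A - F_B on the edge p = (y, 1 - y)
   of the simplex is the quadratic (81 - 109 y - 132 y^2) / 200^2, positive at
   y = 0 and negative at y = 1; its root c in (0, 1) gives a Nash equilibrium with
   both groups present.  Positive correlation makes any admissible dynamics move
   p_A towards c, and Nash stationarity, resp. the net monotonicity of imitation
   rates, rules out other interior rest points.  So (p_A - c)^2 is a strict
   Lyapunov function, whose decay rate is bounded away from zero outside every
   neighbourhood of c by compactness; hence trajectories starting near c converge
   to c. *)

From HB Require Import structures.
From mathcomp Require Import all_boot all_order all_algebra.
From mathcomp Require Import all_classical all_reals all_analysis.
From mathcomp Require Import ring lra.
Import Order.TTheory GRing.Theory Num.Theory.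
Import numFieldNormedType.Exports.
Set Implicit Arguments. Unset Strict Implicit. Unset Printing Implicit Defensive.
Local Open Scope ring_scope.
Local Open Scope classical_set_scope.

Section Lyapunov.
Variable R : realType.

Lemma ler0_derive1_nonincr (f : R -> R) :
  {within [set t | 0 <= t], continuous f} ->
  (forall t, 0 < t -> derivable f t 1 /\ derive1 f t <= 0) ->
  forall s t, 0 <= s -> s <= t -> f t <= f s.
Proof.
move=> cf df s t s0 st.
have t0 : 0 <= t by apply: le_trans st.
apply: (@ler0_derive1_le_cc R f 0 t) => //.
- by move=> x /[!in_itv] /= /andP[x0 _]; case: (df x x0).
- by move=> x /[!in_itv] /= /andP[x0 _]; case: (df x x0).
- by apply: continuous_subspaceW cf => x /=; rewrite in_itv /= => /andP[].
- by rewrite in_itv /= t0 lexx.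
- by rewrite in_itv /= s0 st.
Qed.

Lemma derive1_sqr_dist_lin (a : R -> R) (c k t : R) : derivable a t 1 ->
  derivable (fun s => (a s - c) ^+ 2 + k * s) t 1 /\
  derive1 (fun s => (a s - c) ^+ 2 + k * s) t = 2 * (a t - c) * derive1 a t + k.
Proof.
move=> da.
have [] : is_derive t 1 ((a - cst c) ^+ 2 + k \*o id)
   ((2%:R * (a - cst c) t ^+ 1) *: (derive1 a t - 0) + k * 1).
  have a_deriv : is_derive t 1 a (derive1 a t).
    by rewrite derive1E; exact: derivableP.
  exact: is_deriveD.
move=> d_ex d_eq; split => //; rewrite derive1E d_eq /=.
by rewrite expr1 subr0 mulr1.
Qed.

Lemma continuous_sqr_dist_lin (a : R -> R) (c k : R) :
  {within [set t | 0 <= t], continuous a} ->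
  {within [set t | 0 <= t], continuous (fun s => (a s - c) ^+ 2 + k * s)}.
Proof.
move=> ca x; apply: cvgD.
  by rewrite expr2; apply: cvgM; apply: cvgB; by [exact: ca | exact: cvg_cst].
apply: cvgM; first exact: cvg_cst.
exact: (@continuous_subspaceT _ _ _ id (fun _ => cvg_id) x).
Qed.

Section ScalarDynamics.
Variables (g : R -> R) (c d : R).
Hypothesis g_cont : {in `[c - d, c + d]%R, continuous g}.
Hypothesis g_inward : forall y, 0 < `|y - c| <= d -> (y - c) * g y < 0.

Lemma inward_rate (e : R) : 0 < e <= d ->
  exists2 mu, 0 < mu & forall y, e <= `|y - c| <= d -> (y - c) * g y <= - mu.
Proof.
move=> /andP[e0 ed].
have h_cont lo hi : c - d <= lo -> hi <= c + d ->
    {within `[lo, hi], continuous (fun y => (y - c) * g y)}.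
  move=> dlo dhi; apply: continuous_in_subspaceT => y.
  move=> /set_mem /=; rewrite in_itv /= => /andP[ly yh].
  apply: cvgM; first by apply: cvgB; [exact: cvg_id | exact: cvg_cst].
  by apply: g_cont; rewrite in_itv /=; apply/andP; split; lra.
have [le1 le2 le3 le4] : [/\ c - d <= c - e, c - e <= c + d, c - d <= c + e & c + e <= c + d].
  by split; lra.
have [m1 + hm1] := EVT_max le1 (h_cont _ _ (lexx _) le2).
have [m2 + hm2] := EVT_max le4 (h_cont _ _ le3 (lexx _)).
rewrite !in_itv /= => /andP[m2l m2r] /andP[m1l m1r].
have g1 : (m1 - c) * g m1 < 0 by apply: g_inward; rewrite ltr0_norm; lra.
have g2 : (m2 - c) * g m2 < 0 by apply: g_inward; rewrite gtr0_norm; lra.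
exists (Num.min (- ((m1 - c) * g m1)) (- ((m2 - c) * g m2))).
  by rewrite lt_min !oppr_gt0 g1 g2.
move=> y /andP[]; rewrite ler_normr ler_norml => /orP[ey|ey] /andP[dy yd].
- rewrite lerNr ge_min; apply/orP; right; rewrite lerN2.
  by apply: hm2; rewrite in_itv /=; apply/andP; split; lra.
- rewrite lerNr ge_min; apply/orP; left; rewrite lerN2.
  by apply: hm1; rewrite in_itv /=; apply/andP; split; lra.
Qed.

Variable a : R -> R.
Hypothesis a_cont : {within [set t | 0 <= t], continuous a}.
Hypothesis a_ode : forall t, 0 < t -> derivable a t 1 /\ derive1 a t = g (a t).
Hypothesis a_inward : forall t, 0 <= t -> (a t - c) * g (a t) <= 0.
Hypothesis a0_near : `|a 0 - c| < d.

Lemma lyapunov_nonincr (k : R) :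
  (forall t, 0 < t -> 2 * ((a t - c) * g (a t)) + k <= 0) ->
  forall s t, 0 <= s -> s <= t -> (a t - c) ^+ 2 + k * t <= (a s - c) ^+ 2 + k * s.
Proof.
move=> rate; apply: ler0_derive1_nonincr; first exact: continuous_sqr_dist_lin.
move=> t t0; have [da ea] := a_ode t0.
have [du ->] := derive1_sqr_dist_lin c k da.
by split => //; rewrite ea -mulrA; exact: rate.
Qed.

Lemma dist_nonincr s t : 0 <= s -> s <= t -> `|a t - c| <= `|a s - c|.
Proof.
move=> s0 st; rewrite -(ler_sqr (normr_nneg _) (normr_nneg _)) !real_normK ?num_real //.
have := lyapunov_nonincr (k := 0) _ s0 st; rewrite !mul0r !addr0; apply.
by move=> u u0; have := a_inward (ltW u0); lra.
Qed.

Lemma dist_lt t : 0 <= t -> `|a t - c| < d.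
Proof. by move=> t0; apply: le_lt_trans (dist_nonincr (lexx 0) t0) a0_near. Qed.

Lemma eventually_close (e : R) : 0 < e <= d -> exists2 T, 0 <= T & `|a T - c| < e.
Proof.
move=> ed; apply: contrapT => never_close.
have far t : 0 <= t -> e <= `|a t - c| <= d.
  move=> t0; rewrite (ltW (dist_lt t0)) andbT leNgt; apply/negP => close.
  by apply: never_close; exists t.
have [mu mu0 rate] := inward_rate ed.
(* Otherwise (a - c)^2 would decrease at rate at least 2 mu and be negative at time T. *)
pose T := d ^+ 2 / (2 * mu).
have T0 : 0 <= T by rewrite /T divr_ge0 ?sqr_ge0 // mulr_ge0 // ltW.
have muT : 2 * mu * T = d ^+ 2 by rewrite /T mulrC divfK // gt_eqF // mulr_gt0.
have a0 : (a 0 - c) ^+ 2 < d ^+ 2.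
  have := normr_ge0 (a 0 - c); have := a0_near.
  rewrite -[(a 0 - c) ^+ 2](real_normK (num_real _)); nra.
have decay t : 0 < t -> 2 * ((a t - c) * g (a t)) + 2 * mu <= 0.
  by move=> t0; have := rate _ (far _ (ltW t0)); lra.
have := lyapunov_nonincr decay (lexx 0) T0.
by rewrite muT mulr0 addr0; have := sqr_ge0 (a T - c); lra.
Qed.

Lemma lyapunov_cvg : a t @[t --> +oo] --> c.
Proof.
apply/cvgrPdist_lt => e e0.
have d0 : 0 < d by apply: le_lt_trans a0_near.
have [|T T0 close] := @eventually_close (Num.min e d).
  by rewrite lt_min e0 d0 ge_min lexx orbT.
exists T; split; first exact: num_real.
move=> t Tt; rewrite distrC; apply: le_lt_trans (dist_nonincr T0 (ltW Tt)) _.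
by apply: lt_le_trans close _; rewrite ge_min lexx.
Qed.

End ScalarDynamics.
End Lyapunov.

Section TwoStrategyGames.
Variable R : realType.

Lemma edge_simplex (y : R) : 0 <= y <= 1 -> simplex2 (y, 1 - y).
Proof. by move=> /andP[y0 y1]; split => /=; lra. Qed.

Lemma nash_equal_payoffs (F : R * R -> R * R) (p : R * R) :
  simplex2 p -> (F p).1 = (F p).2 -> nash F p.
Proof. by move=> sp eqF; split => // -[] _ [] /=; rewrite ?eqF. Qed.

Lemma edge_continuous (V : R * R -> R * R) : {within @simplex2 R, continuous V} ->
  {in `]0, 1[%R, continuous (fun y : R => (V (y, 1 - y)).1)}.
Proof.
move=> cV x x01.
have edge_cvg : (fun y : R => (y, 1 - y)) @ x --> (x, 1 - x).
  have cvg2 : (fun y : R => 1 - y) @ x --> 1 - x.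
    by apply: cvgB; [exact: cvg_cst | exact: cvg_id].
  exact: cvg_pair cvg_id cvg2.
have edge_within : (fun y : R => (y, 1 - y)) @ x --> within (@simplex2 R) (nbhs (x, 1 - x)).
  move=> P hP; change (\forall y \near x, P (y, 1 - y)).
  have edgeP : \forall y \near x, (simplex2 (y, 1 - y) -> P (y, 1 - y)) := edge_cvg _ hP.
  near=> y.
  have : y \in `]0, 1[%R by near: y; exact: near_in_itvoo.
  rewrite in_itv /= => /andP[y0 y1].
  have y_simplex : simplex2 (y, 1 - y) by apply: edge_simplex; rewrite !ltW.
  exact: (near edgeP y).
have V_cvg : V @ within (@simplex2 R) (nbhs (x, 1 - x)) --> V (x, 1 - x).
  have /andP[x0 x1] : 0 < x < 1 by move: x01; rewrite in_itv.
  have x_simplex : simplex2 (x, 1 - x) by apply: edge_simplex; rewrite !ltW.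
  by rewrite nbhs_subspace_in //; exact: cV.
exact: cvg_comp (cvg_comp _ _ edge_within V_cvg) cvg_fst.
Unshelve. all: end_near.
Qed.

Section InteriorStability.
Variables (F V : R * R -> R * R) (c : R).
Hypothesis c01 : 0 < c < 1.
Hypothesis gap_inward : forall y, 0 <= y <= 1 -> y != c ->
  (y - c) * ((F (y, 1 - y)).1 - (F (y, 1 - y)).2) < 0.
Hypothesis V_admissible : admissible_dynamics F V.

Local Notation v y := (V (y%R, 1 - y)).1.

Lemma edge_velocity y : 0 <= y <= 1 -> V (y, 1 - y) = (v y, - v y).
Proof.
move=> y01; have [_ tangent _ _] := V_admissible.
have [sum0 _ _] := tangent _ (edge_simplex y01).
by rewrite [LHS]surjective_pairing; congr pair; lra.
Qed.

Lemma edge_rest_equal_payoffs y : 0 < y < 1 -> v y = 0 ->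
  (F (y, 1 - y)).1 = (F (y, 1 - y)).2.
Proof.
move=> /andP[y0 y1] v0; have y01 : 0 <= y <= 1 by rewrite !ltW.
have [_ _ _ [nash_stat | [r imit]]] := V_admissible.
- have rest : V (y, 1 - y) = (0, 0) by rewrite edge_velocity // v0 oppr0.
  have [_ best] := (nash_stat _ (edge_simplex y01)).1 rest.
  have y'0 : 0 < 1 - y by lra.
  have := best true y0 false; have := best false y'0 true => /= FAB FBA.
  by apply/le_anti/andP.
- have [_ /(_ true) vE monotone] := imit _ (edge_simplex y01).
  rewrite /= !big_bool /= v0 in vE.
  have r_sym : r false true (y, 1 - y) = r true false (y, 1 - y).
    apply/eqP; rewrite -subr_eq0; apply/eqP.
    have yy : y * (1 - y) != 0 by rewrite mulf_neq0 // ?subr_eq0 gt_eqF.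
    by apply: (mulfI yy); rewrite mulr0 vE; ring.
  have := (monotone true false true).2; have := (monotone false true false).2.
  rewrite /= r_sym !subrr lexx => FBA FAB.
  by apply/le_anti/andP; split; [exact: FAB | exact: FBA].
Qed.

Lemma edge_moving_inward y : 0 <= y <= 1 -> y != c -> v y != 0 -> (y - c) * v y < 0.
Proof.
move=> y01 yc v0; have [_ _ pos_corr _] := V_admissible.
have moving : V (y, 1 - y) <> (0, 0).
  by rewrite edge_velocity // => -[] /eqP; rewrite (negbTE v0).
have := pos_corr _ (edge_simplex y01) moving; rewrite edge_velocity //= => corr.
(* [corr] says v y (F_A - F_B) > 0, while (y - c) (F_A - F_B) < 0. *)
have := gap_inward y01 yc; have := sqr_ge0 ((F (y, 1 - y)).1 - (F (y, 1 - y)).2).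
nra.
Qed.

Lemma edge_inward_strict y : 0 < y < 1 -> y != c -> (y - c) * v y < 0.
Proof.
move=> y01 yc; have y01' : 0 <= y <= 1 by case/andP: y01 => *; rewrite !ltW.
apply: edge_moving_inward => //; apply/eqP => /(edge_rest_equal_payoffs y01) eqF.
by have := gap_inward y01' yc; rewrite eqF subrr mulr0 ltxx.
Qed.

Lemma edge_inward y : 0 <= y <= 1 -> (y - c) * v y <= 0.
Proof.
move=> y01; have [-> | yc] := eqVneq y c; first by rewrite subrr mul0r.
have [-> | v0] := eqVneq (v y) 0; first by rewrite mulr0.
exact/ltW/edge_moving_inward.
Qed.

Lemma interior_attracting : attracting V (c, 1 - c).
Proof.
have /andP[c0 c1] := c01; have [V_cont _ _ _] := V_admissible.
pose d := Num.min c (1 - c) / 2.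
have [d0 dc dc'] : [/\ 0 < d, d <= c / 2 & d <= (1 - c) / 2].
  by rewrite /d divr_gt0 // ?lt_min ?c0 ?subr_gt0 // !ler_pM2r // !ge_min !lexx ?orbT.
exists d => // a b ab_simplex a0 _ a_cont _ ode.
have a01 t : 0 <= t -> 0 <= a t <= 1.
  by move=> /ab_simplex [/= a_ge0 b_ge0 ab1]; apply/andP; split; lra.
have bE t : 0 <= t -> b t = 1 - a t by move=> /ab_simplex [/= _ _ ab1]; lra.
have a_cvg : a t @[t --> +oo] --> c.
  apply: (lyapunov_cvg (g := fun y => v y) (d := d)) => //.
  - move=> y; rewrite in_itv /= => /andP[y_lo y_hi].
    by apply: edge_continuous V_cont _ _; rewrite in_itv /=; apply/andP; split; lra.
  - move=> y /andP[]; rewrite normr_gt0 subr_eq0 ler_norml => yc /andP[y_lo y_hi].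
    by apply: edge_inward_strict => //; apply/andP; split; lra.
  - by move=> t t0; have [da _ -> _] := ode t t0; rewrite bE ?ltW.
  - by move=> t t0; apply/edge_inward/a01.
split => //; apply: (@cvg_trans _ ((1 - a t) @[t --> +oo])).
  apply: near_eq_cvg; exists 0; split; first exact: num_real.
  by move=> t t0; rewrite bE // ltW.
by apply: cvgB => //; exact: cvg_cst.
Qed.

End InteriorStability.

End TwoStrategyGames.

Section TwoSampleGames.
Variable R : realType.

Lemma sum_ffun_ord2 (T : finType) (F : {ffun 'I_2 -> T} -> R) :
  \sum_S F S = \sum_z1 \sum_z2 F [ffun j : 'I_2 => if val j == 0%N then z1 else z2].
Proof.
rewrite pair_bigA /=.
rewrite (reindex (fun z : T * T => [ffun j : 'I_2 => if val j == 0%N then z.1 else z.2])) //=.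
exists (fun S : {ffun 'I_2 -> T} => (S ord0, S ord_max)).
  by move=> [z1 z2] _; rewrite !ffunE.
move=> S _; apply/ffunP => j; rewrite ffunE.
by case: j => [[|[|//]] ?] /=; congr (S _); apply: val_inj.
Qed.

Lemma game_two_samples (X : Type) (d : X -> X -> R) (m : nat) (pts : 'I_m -> X)
    (DA DB Dk : 'I_m * bool -> R) (p : R * R) :
  \sum_(S : {ffun 'I_2 -> 'I_m * bool})
      sample_prob (mixture DA DB p) S * nn_accuracy d pts S Dk =
  \sum_z1 \sum_z2 mixture DA DB p z1 * mixture DA DB p z2 *
     \sum_z Dk z *
       ((if d (pts z.1) (pts z2.1) < d (pts z.1) (pts z1.1) then z2 else z1).2 == z.2)%:R.
Proof.
rewrite sum_ffun_ord2; apply: eq_bigr => z1 _; apply: eq_bigr => z2 _.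
rewrite /sample_prob /nn_accuracy !big_ord_recr big_ord0 /= !ffunE /= mul1r.
rewrite enum_ordSl enum_ordSl enum_ord0 /= !ffunE /=.
by congr (_ * _); apply: eq_bigr => z _; case: ifP.
Qed.

End TwoSampleGames.

Section Example.
Variable R : realType.

Definition dist3_nat (i j : nat) : nat :=
  match i, j with
  | 0, 1 | 1, 0 => 3
  | 0, 2 | 2, 0 => 4
  | 1, 2 | 2, 1 => 2
  | _, _ => 0
  end.

Definition dist3 (i j : 'I_3) : R := (dist3_nat i j)%:R.

Definition noisy (m : nat) (mu : 'I_m -> R) (f : 'I_m -> bool) (eta : R)
    (z : 'I_m * bool) : R :=
  mu z.1 * (if z.2 == f z.1 then 1 - eta else eta).

Definition muA (i : 'I_3) : R := if val i == 2%N then 1 else 0.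
Definition muB (i : 'I_3) : R := match val i with 0 => 1/4 | 1 => 1/20 | _ => 7/10 end.
Definition DA : 'I_3 * bool -> R := noisy muA (fun _ => false) (1/10).
Definition DB : 'I_3 * bool -> R := noisy muB (fun i => val i == 1%N) (1/20).

Lemma sum_ord3_bool (F : 'I_3 * bool -> R) : \sum_z F z =
  F (ord0, true) + F (ord0, false) + F (inord 1, true) + F (inord 1, false)
  + F (inord 2, true) + F (inord 2, false).
Proof.
rewrite (eq_bigr (fun z => F (z.1, z.2))); last by case.
rewrite -(pair_bigA _ (fun a b => F (a, b))) /= !big_ord_recl big_ord0 !big_bool /= addr0 !addrA.
by congr (_ + _ + _ + _ + _ + _); congr (F (_, _)); apply: val_inj => //=; rewrite inordK.
Qed.

Lemma game_gap (y : R) :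
  (game dist3 id 2 DA DB (y, 1 - y)).1 - (game dist3 id 2 DA DB (y, 1 - y)).2 =
  (81 - 109 * y - 132 * y ^+ 2) / (200 * 200).
Proof.
rewrite /game /= !game_two_samples !sum_ord3_bool.
rewrite /mixture /DA /DB /noisy /muA /muB /dist3 /= !inordK //= !ltr_nat /=.
by field.
Qed.

(* 233 * 233 + 360 = 109^2 + 4 * 132 * 81 is the discriminant of the gap; it is not
   written as one numeral because numerals in [R] are built from unary naturals. *)
Definition sqrt_disc : R := Num.sqrt (233 * 233 + 360).
Definition gap_root : R := (sqrt_disc - 109) / 264.

Lemma sqr_sqrt_disc : sqrt_disc ^+ 2 = 233 * 233 + 360.
Proof. by rewrite sqr_sqrtr; last by rewrite addr_ge0 ?mulr_ge0 ?ler0n. Qed.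

Lemma gap_root_itv : 0 < gap_root < 1.
Proof.
have s2 := sqr_sqrt_disc; have s0 : 0 <= sqrt_disc := sqrtr_ge0 _.
have s_gt : 109 < sqrt_disc by nra.
have s_lt : sqrt_disc < 373 by nra.
by rewrite /gap_root; apply/andP; split; lra.
Qed.

Lemma gap_factor (y : R) :
  81 - 109 * y - 132 * y ^+ 2 = - 132 * (y - gap_root) * (y + (sqrt_disc + 109) / 264).
Proof.
transitivity (81 - 109 * y - 132 * y ^+ 2 + (sqrt_disc ^+ 2 - (233 * 233 + 360)) / 528).
  by rewrite sqr_sqrt_disc subrr mul0r addr0.
by rewrite /gap_root; field.
Qed.

Lemma gap_sign (y : R) : 0 <= y -> y != gap_root ->
  (y - gap_root) * (81 - 109 * y - 132 * y ^+ 2) < 0.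
Proof.
move=> y0 yc; rewrite gap_factor.
have s0 : 0 <= sqrt_disc := sqrtr_ge0 _.
have k0 : 0 < y + (sqrt_disc + 109) / 264 by lra.
have d0 : 0 < (y - gap_root) ^+ 2 by rewrite exprn_even_gt0 // subr_eq0.
nra.
Qed.

Lemma dist3_metric : is_metric dist3.
Proof.
split.
- by move=> x y; rewrite ler0n.
- move=> x y; rewrite /dist3; split => [/eqP|->]; last by case: y => [[|[|[|//]]] ?].
  rewrite pnatr_eq0.
  by case: x => [[|[|[|//]]] ?]; case: y => [[|[|[|//]]] ?] //= _; apply: val_inj.
- by move=> [[|[|[|//]]] ?] [[|[|[|//]]] ?].
- move=> x y z; rewrite /dist3 -natrD ler_nat.
  by case: x => [[|[|[|//]]] ?]; case: y => [[|[|[|//]]] ?]; case: z => [[|[|[|//]]] ?].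
Qed.

Lemma noisy_label_dist_noisy (m : nat) (mu : 'I_m -> R) (f : 'I_m -> bool) (eta : R) :
  (forall i, 0 <= mu i) -> \sum_(i < m) mu i = 1 -> 0 < eta < 1 / 2 ->
  noisy_label_dist id (noisy mu f eta).
Proof. by move=> mu0 mu1 /andP[eta0 eta1]; exists mu, f, eta. Qed.

Lemma DA_noisy : noisy_label_dist id DA.
Proof.
apply: noisy_label_dist_noisy; last by apply/andP; split; lra.
- by move=> i; rewrite /muA; case: ifP => _; lra.
- by rewrite !big_ord_recl big_ord0 /muA /=; lra.
Qed.

Lemma DB_noisy : noisy_label_dist id DB.
Proof.
apply: noisy_label_dist_noisy; last by apply/andP; split; lra.
- by move=> i; rewrite /muB; case: (val i) => [|[|?]]; lra.
- by rewrite !big_ord_recl big_ord0 /muB /=; lra.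
Qed.

Lemma game_gap_inward (y : R) : 0 <= y <= 1 -> y != gap_root ->
  (y - gap_root) *
    ((game dist3 id 2 DA DB (y, 1 - y)).1 - (game dist3 id 2 DA DB (y, 1 - y)).2) < 0.
Proof.
move=> /andP[y0 _] yc; rewrite game_gap mulrA pmulr_llt0; first exact: gap_sign.
by rewrite invr_gt0; lra.
Qed.

End Example.

Theorem theorem6 (R : realType) :
  exists (X : Type) (d : X -> X -> R) (m : nat) (pts : 'I_m -> X)
         (DA DB : 'I_m * bool -> R) (n : nat) (ps : R * R),
    [/\ is_metric d, noisy_label_dist pts DA, noisy_label_dist pts DB,
        (0 < n)%N &
        [/\ nash (game d pts n DA DB) ps, 0 < ps.1, 0 < ps.2 &
            forall V : R * R -> R * R,
              admissible_dynamics (game d pts n DA DB) V -> attracting V ps]].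
Proof.
have /andP[c0 c1] := @gap_root_itv R.
exists 'I_3, (@dist3 R), 3, id, (@DA R), (@DB R), 2, (gap_root R, 1 - gap_root R).
split => //; [exact: dist3_metric | exact: DA_noisy | exact: DB_noisy |].
split => /=; [| exact: c0 | by rewrite subr_gt0 |].
- apply: nash_equal_payoffs; first by apply: edge_simplex; rewrite !ltW.
  apply/eqP; rewrite -subr_eq0 game_gap gap_factor subrr.
  by rewrite mulr0 mul0r mul0r.
- move=> V V_adm; apply: interior_attracting V_adm; first exact: gap_root_itv.
  exact: game_gap_inward.
Qed.
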